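(* $\mathcal{OBLOT}^{F}_{\mathcal{F.V.}} > \mathcal{OBLOT}^{F}_{\mathcal{L.V.}}$, i.e. the model $\mathcal{OBLOT}$ under the fully synchronous scheduler with full visibility is computationally more powerful than the model $\mathcal{OBLOT}$ under the fully synchronous scheduler with limited visibility.
   Context: Robots are anonymous, identical, autonomous computational entities viewed as points moving in the Euclidean plane. Each has its own local coordinate system, with no agreement between robots and no common chirality, and perceives itself at its origin. Robots operate in Look-Compute-Move cycles. In Look a robot takes an instantaneous snapshot of the positions (and visible lights, if any) of the robots it can see. In Compute it runs the common algorithm on the snapshot to obtain a destination. In Move it moves there. Models: - $\mathcal{OBLOT}$: robots are oblivious (no memory of previous cycles) and silent (no means of communication). - $\mathcal{LUMI}$: each robot carries a persistent light whose color is taken from a finite set and is set at the end of Compute; the light is visible to the robot itself and to the other robots. - $\mathcal{FSTA}$: the light is internal, visible only to its owner. It acts as a finite persistent state; there is no communication. - $\mathcal{FCOM}$: the light is visible only to the other robots. A robot does not see its own light and is otherwise oblivious. Schedulers: time is divided into rounds. Under the semi-synchronous scheduler $S$ (SSYNCH), in each round an adversarially chosen set of robots is activated and they perform one full cycle in perfect synchronization; every robot is activated infinitely often. Under the fully synchronous scheduler $F$ (FSYNCH), every robot is activated in every round. Visibility: - Full visibility $\mathcal{F.V.}$: every robot sees all robots. - Limited visibility $\mathcal{L.V.}$: a robot sees only the robots within a fixed distance $V_r$ of its current position, with $V_r$ the same for all robots. The visibility graph (robots adjacent iff they see each other) of the initial configuration is assumed connected. Relations: $\mathcal{M}^X_V$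 denotes model $\mathcal{M}$ under scheduler $X$ with visibility $V$. For a team $R$ of robots, $Task(\mathcal{M},X,V;R)$ is the set of problems (tasks where robots must form some configuration(s) subject to conditions) solvable by $R$ in that setting. $\mathcal{R}$ is the set of all teams, and $\mathcal{R}_n$ the set of teams of size $n$. - $\mathcal{M}^{X_1}_{V_1} \ge \mathcal{N}^{X_2}_{V_2}$ if for all $R\in\mathcal{R}$, $Task(\mathcal{M},X_1,V_1;R)\supseteq Task(\mathcal{N},X_2,V_2;R)$. - $>$ means $\ge$ holds and there exists $R\in\mathcal{R}$ with $Task(\mathcal{M},X_1,V_1;R)\setminus Task(\mathcal{N},X_2,V_2;R)\neq\emptyset$. - $\perp$ (incomparable) means there exist $R_1,R_2\in\mathcal{R}$ with $Task(\mathcal{M},X_1,V_1;R_1)\setminus Task(\mathcal{N},X_2,V_2;R_1)\neq\emptyset$ and $Task(\mathcal{N},X_2,V_2;R_2)\setminus Task(\mathcal{M},X_1,V_1;R_2)\neq\emptyset$. *)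

From Stdlib Require Import Reals List Relations.
Open Scope R_scope.

Definition point : Type := (R * R)%type.
Definition vsub (p q : point) : point := (fst p - fst q, snd p - snd q).
Definition vadd (p q : point) : point := (fst p + fst q, snd p + snd q).
Definition norm (v : point) : R := sqrt (fst v ^ 2 + snd v ^ 2).
Definition dist (p q : point) : R := norm (vsub p q).

(** A robot's local frame: origin at the robot's current position, an
    arbitrary orientation (rotation by the angle with cosine/sine
    [fr_cos]/[fr_sin]), an arbitrary handedness ([fr_refl]: no common
    chirality) and an arbitrary unit of distance ([fr_scale] > 0). *)
Record frame : Type := Frame {
  fr_cos : R; fr_sin : R; fr_refl : bool; fr_scale : R }.

Definition valid_frame (F : frame) : Prop :=
  fr_cos F ^ 2 + fr_sin F ^ 2 = 1 /\ 0 < fr_scale F.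

Definition flip (b : bool) (v : point) : point :=
  if b then (fst v, - snd v) else v.
Definition rot (c s : R) (v : point) : point :=
  (c * fst v - s * snd v, s * fst v + c * snd v).

Definition local_to_global (F : frame) (v : point) : point :=
  let w := rot (fr_cos F) (fr_sin F) (flip (fr_refl F) v) in
  (fr_scale F * fst w, fr_scale F * snd w).
Definition global_to_local (F : frame) (w : point) : point :=
  flip (fr_refl F)
    (rot (fr_cos F) (- fr_sin F) (/ fr_scale F * fst w, / fr_scale F * snd w)).

Record team : Type := Team {
  t_n : nat; t_Vr : R; t_n_pos : (0 < t_n)%nat; t_Vr_pos : 0 < t_Vr }.

(* robots of a team of size n are indexed 0 .. n-1 *)
Definition config : Type := nat -> point.
Definition execution : Type := nat -> config.

Inductive visibility : Type := FullVis | LimitedVis.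

Definition sees (vis : visibility) (T : team) (p q : point) : bool :=
  match vis with
  | FullVis => true
  | LimitedVis => if Rle_dec (dist p q) (t_Vr T) then true else false
  end.

Definition vis_edge (T : team) (C : config) (i j : nat) : Prop :=
  (i < t_n T)%nat /\ (j < t_n T)%nat /\ dist (C i) (C j) <= t_Vr T.
Definition vis_connected (T : team) (C : config) : Prop :=
  forall i j, (i < t_n T)%nat -> (j < t_n T)%nat ->
    clos_refl_trans nat (vis_edge T C) i j.

(** Oblivious, silent, anonymous, identical robots: the common algorithm maps
    (the known visibility radius expressed in local units, the snapshot) to a
    destination in local coordinates.  The snapshot is the list of local
    positions of the visible robots (including the robot itself, at the
    origin); the algorithm may depend only on the SET of visible positions
    (anonymity, no identities, no multiplicity detection). *)
Definition algorithm : Type := R -> list point -> point.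

Definition valid_algorithm (A : algorithm) : Prop :=
  forall r s1 s2, (forall p, In p s1 <-> In p s2) -> A r s1 = A r s2.

Definition snapshot (vis : visibility) (T : team) (F : frame) (C : config) (i : nat)
  : list point :=
  map (fun j => global_to_local F (vsub (C j) (C i)))
      (filter (fun j => sees vis T (C i) (C j)) (seq 0 (t_n T))).

(* One fully synchronous round: every robot performs Look-Compute-Move and
   reaches (rigidly) its computed destination. *)
Definition fsync_round (A : algorithm) (vis : visibility) (T : team)
  (frames : nat -> frame) (C : config) : config :=
  fun i =>
    if Nat.ltb i (t_n T) then
      vadd (C i) (local_to_global (frames i)
                    (A (t_Vr T / fr_scale (frames i)) (snapshot vis T (frames i) C i)))
    else C i.

Fixpoint fsync_exec (A : algorithm) (vis : visibility) (T : team)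
  (frames : nat -> frame) (C0 : config) (t : nat) : config :=
  match t with
  | O => C0
  | S t' => fsync_round A vis T frames (fsync_exec A vis T frames C0 t')
  end.

Definition problem : Type := team -> execution -> Prop.

Definition Task_OBLOT_F (vis : visibility) (T : team) (P : problem) : Prop :=
  exists A : algorithm, valid_algorithm A /\
    forall frames : nat -> frame, (forall i, valid_frame (frames i)) ->
    forall C0 : config, vis_connected T C0 ->
      P T (fsync_exec A vis T frames C0).

Definition setting : Type := team -> problem -> Prop.

Definition setting_ge (M N : setting) : Prop :=
  forall T P, N T P -> M T P.

Definition setting_gt (M N : setting) : Prop :=
  setting_ge M N /\ exists T P, M T P /\ ~ N T P.

(* Full visibility simulates limited visibility: the algorithm receives the
   visibility radius in its own units of length, so it can discard from a full
   snapshot every robot farther than that radius and then run the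
   limited-visibility algorithm on the rest.
   For strictness, consider the problem in which each robot must stay put in
   the first round exactly when all robots are within distance Vr of it.  With
   full visibility a robot just inspects its snapshot.  With limited visibility
   take three robots and Vr = 1, placed at 0, 1, 2 on a line, or folded at
   0, 1, 0.  Robot 0 sees the same set of positions in both configurations, so
   it makes the same move, yet it must stay in the folded configuration and
   move on the line. *)

From Pilot Require Import Defs.
From Stdlib Require Import Reals List Relations.
From Stdlib Require Import Lra Lia FunctionalExtensionality.
Open Scope R_scope.

Lemma norm_flip b v : norm (flip b v) = norm v.
Proof. destruct b; unfold norm, flip; simpl; f_equal; ring. Qed.

Lemma norm_rot c s v : c ^ 2 + s ^ 2 = 1 -> norm (rot c s v) = norm v.
Proof.
  intros Hcs; unfold norm, rot; simpl; f_equal.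
  transitivity ((c ^ 2 + s ^ 2) * (fst v ^ 2 + snd v ^ 2)); [ring|].
  rewrite Hcs; ring.
Qed.

Lemma norm_scale k v : 0 <= k -> norm (k * fst v, k * snd v) = k * norm v.
Proof.
  intros Hk; unfold norm; cbn [fst snd].
  replace ((k * fst v) ^ 2 + (k * snd v) ^ 2)
    with (k ^ 2 * (fst v ^ 2 + snd v ^ 2)) by ring.
  rewrite sqrt_mult_alt, sqrt_pow2; nra.
Qed.

Lemma norm_global_to_local F w :
  valid_frame F -> norm (global_to_local F w) = norm w / fr_scale F.
Proof.
  intros [Hcs Hk]; unfold global_to_local.
  rewrite norm_flip, norm_rot, norm_scale.
  - unfold Rdiv; ring.
  - apply Rlt_le, Rinv_0_lt_compat; exact Hk.
  - lra.
Qed.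

Lemma norm_local_to_global F v :
  valid_frame F -> norm (local_to_global F v) = fr_scale F * norm v.
Proof.
  intros [Hcs Hk]; unfold local_to_global.
  rewrite norm_scale, norm_rot, norm_flip; lra.
Qed.

Lemma norm_eq0 v : norm v = 0 -> v = (0, 0).
Proof.
  destruct v as [x y]; unfold norm; simpl; intros H.
  apply sqrt_eq_0 in H; [|nra].
  f_equal; nra.
Qed.

Lemma norm_vsub_dist p q : norm (vsub q p) = Defs.dist p q.
Proof. unfold Defs.dist, norm, vsub; simpl; f_equal; ring. Qed.

Lemma dist_comm p q : Defs.dist p q = Defs.dist q p.
Proof. symmetry; apply norm_vsub_dist. Qed.

Lemma vadd_eq_l p w : vadd p w = p -> w = (0, 0).
Proof.
  destruct p as [x y], w as [a b]; unfold vadd; simpl.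
  intros H; injection H; intros; f_equal; lra.
Qed.

Lemma vadd_0_r p : vadd p (0, 0) = p.
Proof. destruct p; unfold vadd; simpl; f_equal; ring. Qed.

Lemma local_to_global_0 F : local_to_global F (0, 0) = (0, 0).
Proof.
  destruct F as [c s [|] k]; unfold local_to_global, rot, flip; simpl; f_equal; ring.
Qed.

Definition within (r : R) (p : point) : bool :=
  if Rle_dec (norm p) r then true else false.

Lemma within_local F Vr p q : valid_frame F ->
  within (Vr / fr_scale F) (global_to_local F (vsub q p)) = true <-> Defs.dist p q <= Vr.
Proof.
  intros HF; unfold within.
  rewrite norm_global_to_local, norm_vsub_dist by exact HF.
  destruct HF as [_ Hk].
  destruct (Rle_dec _ _) as [H|H]; split; intros H'; try easy.
  - apply Rmult_le_reg_r with (/ fr_scale F); [apply Rinv_0_lt_compat; lra|].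
    exact H.
  - exfalso; apply H. apply Rmult_le_compat_r; [|exact H'].
    apply Rlt_le, Rinv_0_lt_compat; lra.
Qed.

Lemma local_to_global_eq0 F v :
  valid_frame F -> local_to_global F v = (0, 0) -> v = (0, 0).
Proof.
  intros HF Hv; apply norm_eq0.
  assert (Hn : fr_scale F * norm v = 0).
  { rewrite <- norm_local_to_global, Hv by exact HF.
    unfold norm; cbn [fst snd].
    replace (0 ^ 2 + 0 ^ 2) with 0 by ring; exact sqrt_0. }
  destruct HF as [_ Hk]; apply Rmult_integral in Hn; lra.
Qed.

Lemma filter_within_snapshot T F C i : valid_frame F ->
  filter (within (t_Vr T / fr_scale F)) (snapshot FullVis T F C i) =
  snapshot LimitedVis T F C i.
Proof.
  intros HF; unfold snapshot, sees.
  rewrite filter_true, filter_map_swap; f_equal.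
  apply filter_ext_in; intros j _.
  pose proof (within_local F (t_Vr T) (C i) (C j) HF) as Hw.
  destruct (Rle_dec _ _) as [H|H].
  - apply Hw; exact H.
  - destruct within; [exfalso; apply H, Hw|]; reflexivity.
Qed.

Definition restrict_view (A : algorithm) : algorithm :=
  fun r s => A r (filter (within r) s).

Lemma restrict_view_valid A : valid_algorithm A -> valid_algorithm (restrict_view A).
Proof.
  intros HA r s1 s2 Hs; unfold restrict_view; apply HA.
  intros p; rewrite !filter_In, Hs; reflexivity.
Qed.

Lemma fsync_round_restrict_view A T frames C :
  (forall i, valid_frame (frames i)) ->
  fsync_round (restrict_view A) FullVis T frames C = fsync_round A LimitedVis T frames C.
Proof.
  intros Hf; apply functional_extensionality; intros i.
  unfold fsync_round, restrict_view.
  rewrite filter_within_snapshot by apply Hf; reflexivity.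
Qed.

Lemma fsync_exec_restrict_view A T frames C0 :
  (forall i, valid_frame (frames i)) ->
  fsync_exec (restrict_view A) FullVis T frames C0 = fsync_exec A LimitedVis T frames C0.
Proof.
  intros Hf; apply functional_extensionality; intros t.
  induction t as [|t IH]; simpl; [reflexivity|].
  rewrite IH; apply fsync_round_restrict_view, Hf.
Qed.

Lemma full_ge_limited : setting_ge (Task_OBLOT_F FullVis) (Task_OBLOT_F LimitedVis).
Proof.
  intros T P [A [HA HP]].
  exists (restrict_view A); split; [apply restrict_view_valid, HA|].
  intros frames Hf C0 HC0.
  rewrite fsync_exec_restrict_view by exact Hf; apply HP; assumption.
Qed.

Definition stay_iff_all_in_range : problem := fun T E =>
  forall i, (i < t_n T)%nat ->
    (E 1%nat i = E 0%nat i <->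
     forall j, (j < t_n T)%nat -> Defs.dist (E 0%nat i) (E 0%nat j) <= t_Vr T).

Definition move_if_far : algorithm := fun r s =>
  if forallb (within r) s then (0, 0) else (1, 0).

Lemma move_if_far_valid : valid_algorithm move_if_far.
Proof.
  intros r s1 s2 Hs; unfold move_if_far.
  replace (forallb (within r) s2) with (forallb (within r) s1); [reflexivity|].
  apply Bool.eq_true_iff_eq; rewrite !forallb_forall.
  split; intros H p Hp; apply H, Hs; exact Hp.
Qed.

Lemma forallb_within_full_snapshot T F C i : valid_frame F ->
  forallb (within (t_Vr T / fr_scale F)) (snapshot FullVis T F C i) = true <->
  forall j, (j < t_n T)%nat -> Defs.dist (C i) (C j) <= t_Vr T.
Proof.
  intros HF; unfold snapshot, sees; rewrite filter_true, forallb_forall.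
  split.
  - intros H j Hj; apply (within_local F); [exact HF|].
    apply H, in_map_iff; exists j; split; [reflexivity|]; apply in_seq; lia.
  - intros H p Hp; apply in_map_iff in Hp as [j [<- Hj]]; apply in_seq in Hj.
    apply (within_local F); [exact HF|]; apply H; lia.
Qed.

Lemma full_solves_stay_iff_all_in_range T :
  Task_OBLOT_F FullVis T stay_iff_all_in_range.
Proof.
  exists move_if_far; split; [exact move_if_far_valid|].
  intros frames Hf C0 _ i Hi; simpl; unfold fsync_round.
  replace (Nat.ltb i (t_n T)) with true by (symmetry; apply Nat.ltb_lt, Hi).
  rewrite <- (forallb_within_full_snapshot T (frames i) C0 i (Hf i)).
  unfold move_if_far; destruct forallb; split; intros H; try reflexivity.
  - rewrite local_to_global_0; apply vadd_0_r.
  - apply vadd_eq_l, (local_to_global_eq0 _ _ (Hf i)) in H.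
    injection H; lra.
  - discriminate.
Qed.

Lemma fsync_round_same_view A vis T frames C C' i :
  valid_algorithm A -> C i = C' i ->
  (forall p, In p (snapshot vis T (frames i) C i) <-> In p (snapshot vis T (frames i) C' i)) ->
  fsync_round A vis T frames C i = fsync_round A vis T frames C' i.
Proof.
  intros HA Hi Hview; unfold fsync_round.
  rewrite (HA _ _ _ Hview), Hi; reflexivity.
Qed.

Lemma vis_connected_chain T C :
  (forall i, (S i < t_n T)%nat -> Defs.dist (C i) (C (S i)) <= t_Vr T) ->
  vis_connected T C.
Proof.
  intros Hchain.
  assert (Hpath : forall k i, (i + k < t_n T)%nat ->
    clos_refl_trans nat (vis_edge T C) i (i + k)%nat /\
    clos_refl_trans nat (vis_edge T C) (i + k)%nat i).
  { induction k as [|k IH]; intros i Hik.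
    - rewrite Nat.add_0_r; split; apply rt_refl.
    - destruct (IH i) as [Hto Hfrom]; [lia|].
      replace (i + S k)%nat with (S (i + k)) by lia.
      assert (Hd := Hchain (i + k)%nat ltac:(lia)).
      split; eapply rt_trans; try eassumption; apply rt_step;
        (split; [lia | split; [lia |]]).
      + exact Hd.
      + rewrite dist_comm; exact Hd. }
  intros i j Hi Hj.
  destruct (Nat.le_ge_cases i j) as [Hij|Hji].
  - replace j with (i + (j - i))%nat by lia; apply Hpath; lia.
  - replace i with (j + (i - j))%nat by lia; apply Hpath; lia.
Qed.

Lemma dist_on_axis a b : Defs.dist (a, 0) (b, 0) = Rabs (a - b).
Proof.
  unfold Defs.dist, norm, vsub; cbn [fst snd].
  rewrite <- sqrt_Rsqr_abs; f_equal; unfold Rsqr; ring.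
Qed.

Ltac axis_dist := rewrite dist_on_axis; unfold Rabs; destruct Rcase_abs; lra.

Lemma sees_limited_in T p q :
  Defs.dist p q <= t_Vr T -> sees LimitedVis T p q = true.
Proof. intros H; unfold sees; destruct Rle_dec; [reflexivity | contradiction]. Qed.

Lemma sees_limited_out T p q :
  t_Vr T < Defs.dist p q -> sees LimitedVis T p q = false.
Proof. intros H; unfold sees; destruct Rle_dec; [lra | reflexivity]. Qed.

Definition team3 : team := Team 3 1 ltac:(lia) Rlt_0_1.

Definition id_frame : frame := Frame 1 0 false 1.

Lemma id_frame_valid : valid_frame id_frame.
Proof. unfold valid_frame; simpl; lra. Qed.

Definition line_config : config := fun j =>
  match j with 0%nat => (0, 0) | 1%nat => (1, 0) | _ => (2, 0) end.

Definition folded_config : config := fun j =>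
  match j with 1%nat => (1, 0) | _ => (0, 0) end.

Lemma line_connected : vis_connected team3 line_config.
Proof.
  apply vis_connected_chain; simpl; intros [|[|i]] Hi; simpl; try axis_dist; lia.
Qed.

Lemma folded_connected : vis_connected team3 folded_config.
Proof.
  apply vis_connected_chain; simpl; intros [|[|i]] Hi; simpl; try axis_dist; lia.
Qed.

Lemma line_folded_same_view p :
  In p (snapshot LimitedVis team3 id_frame line_config 0) <->
  In p (snapshot LimitedVis team3 id_frame folded_config 0).
Proof.
  unfold snapshot; cbn [t_n team3 seq filter].
  rewrite (sees_limited_in team3 (line_config 0%nat) (line_config 0%nat)),
    (sees_limited_in team3 (line_config 0%nat) (line_config 1%nat)),
    (sees_limited_out team3 (line_config 0%nat) (line_config 2%nat)),
    (sees_limited_in team3 (folded_config 0%nat) (folded_config 0%nat)),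
    (sees_limited_in team3 (folded_config 0%nat) (folded_config 1%nat)),
    (sees_limited_in team3 (folded_config 0%nat) (folded_config 2%nat))
    by (simpl; axis_dist).
  simpl; tauto.
Qed.

Lemma limited_fails_stay_iff_all_in_range :
  ~ Task_OBLOT_F LimitedVis team3 stay_iff_all_in_range.
Proof.
  intros [A [HA HP]].
  set (frames := fun _ : nat => id_frame).
  assert (Hframes : forall i, valid_frame (frames i)) by (intros; apply id_frame_valid).
  assert (Hline := HP frames Hframes line_config line_connected 0%nat ltac:(simpl; lia)).
  assert (Hfolded := HP frames Hframes folded_config folded_connected 0%nat ltac:(simpl; lia)).
  cbn [fsync_exec] in Hline, Hfolded.
  assert (Hstay : fsync_round A LimitedVis team3 frames folded_config 0%nat = folded_config 0%nat).
  { apply Hfolded; simpl; intros [|[|[|j]]] Hj; simpl; try axis_dist; lia. }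
  assert (Hsame : fsync_round A LimitedVis team3 frames line_config 0%nat =
                  fsync_round A LimitedVis team3 frames folded_config 0%nat).
  { apply fsync_round_same_view; [exact HA | reflexivity | exact line_folded_same_view]. }
  assert (Hnear := proj1 Hline (eq_trans Hsame Hstay) 2%nat ltac:(simpl; lia)).
  assert (Hfar : 1 < Defs.dist (line_config 0%nat) (line_config 2%nat)) by (simpl; axis_dist).
  cbn [t_Vr team3] in Hnear; lra.
Qed.

Theorem theorem1 :
  setting_gt (Task_OBLOT_F FullVis) (Task_OBLOT_F LimitedVis).
Proof.
  split; [exact full_ge_limited|].
  exists team3, stay_iff_all_in_range.
  split; [apply full_solves_stay_iff_all_in_range | exact limited_fails_stay_iff_all_in_range].
Qed.
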